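(* Let $p\in(0,1/2)$, $\beta<0$ and $\alpha=\frac{2}{2-p}$. Let $\zeta$ be the global positive increasing solution on $(0,\infty)$ of $$\zeta'=\frac{\alpha^2\zeta+\varphi^p\zeta^{-1}}{\alpha(\alpha-1)\varphi-\beta\zeta}$$ satisfying $\zeta(0^+)=0$ and $|\zeta(\varphi)-\gamma_\beta\varphi^{(p+1)/3}|\le\varphi^q$ for small $\varphi$. Here $\gamma_\beta=[3/(|\beta|(p+1))]^{1/3}$ and $q\in(\frac{p+1}{3},1)$. Then for every $\varepsilon>0$ there exists $\varphi_\varepsilon>0$ such that $$\Big(\frac{\alpha}{|\beta|}-\varepsilon\Big)\varphi\le\zeta(\varphi)\le\Big(\frac{\alpha}{|\beta|}+\varepsilon\Big)\varphi\quad\text{for all }\varphi\ge\varphi_\varepsilon.$$ *)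

From Stdlib Require Export Reals.
From Coquelicot Require Export Coquelicot.
Open Scope R_scope.

Definition gamma_beta (p beta : R) : R :=
  Rpower (3 / (Rabs beta * (p + 1))) (1 / 3).

Definition ode_rhs (p alpha beta phi z : R) : R :=
  (alpha ^ 2 * z + Rpower phi p / z) / (alpha * (alpha - 1) * phi - beta * z).

From Stdlib Require Import Reals Lra Psatz Classical.
From Coquelicot Require Import Coquelicot.
Open Scope R_scope.

(* Proposition 7.3.  Write b = |beta| > 0 and c = alpha / b.  The ratio
   u(phi) = zeta(phi) / phi of a positive solution of the ODE satisfies
     phi * u' = D(u, Q),   D(w, Q) = (w (alpha - b w) + Q) / (alpha (alpha - 1) + b w),
   where Q = phi^p / (zeta(phi) phi) >= 0 is a forcing term.  When u <= c - eps
   the drift is at least (b eps / alpha^2) u > 0; when u >= c + eps and phi is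
   large (so that Q is small) it is at most - eps / (2 alpha).  Consequently:
   - u cannot stay below c - eps for ever (it would grow like a multiple of
     ln phi), nor above c + eps (it would decrease like - ln phi and become
     negative);
   - once inside the band (c - eps, c + eps), u never crosses either edge,
     because the derivative points inwards there (a "barrier" argument). *)

Lemma below_left_of_pos_deriv (f : R -> R) (s l : R) :
  derivable_pt_lim f s l -> 0 < l ->
  exists delta, 0 < delta /\ forall y, s - delta < y < s -> f y < f s.
Proof.
  intros Hd Hl.
  destruct (Hd l Hl) as [delta Hdelta].
  exists delta; split; [apply cond_pos|].
  intros y Hy.
  pose proof (Hdelta (y - s) ltac:(lra) ltac:(rewrite Rabs_left; lra)) as Hquot.
  replace (s + (y - s)) with y in Hquot by ring.
  apply Rabs_def2 in Hquot as [_ Hquot].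
  assert (Hprod : (f y - f s) / (y - s) * (y - s) = f y - f s) by (field; lra).
  nra.
Qed.

Lemma above_near_of_continuity (f : R -> R) (s L : R) :
  continuity_pt f s -> L < f s ->
  exists delta, 0 < delta /\ forall y, Rabs (y - s) < delta -> L < f y.
Proof.
  intros Hc HL.
  destruct (Hc (f s - L) ltac:(lra)) as [delta [Hdelta Hnear]].
  exists delta; split; [exact Hdelta|].
  intros y Hy.
  destruct (Req_dec y s) as [->|Hys]; [exact HL|].
  specialize (Hnear y (conj (conj I (not_eq_sym Hys)) Hy)).
  simpl in Hnear. unfold R_dist in Hnear.
  apply Rabs_def2 in Hnear. lra.
Qed.

(* The first return time to [{f <= L}] would be a supremum [s]
   at which neither [f s <= L] nor [f s > L] is possible. *)
Lemma barrier (f f' : R -> R) (x0 L : R) :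
  (forall x, x0 < x -> derivable_pt_lim f x (f' x)) ->
  (forall x, x0 < x -> f x <= L -> 0 < f' x) ->
  forall x1, x0 < x1 -> L < f x1 -> forall x2, x1 <= x2 -> L < f x2.
Proof.
  intros Hd Hpush x1 Hx1 Hf1 x2 H12.
  destruct (Rlt_or_le L (f x2)) as [Hf2|Hf2]; [exact Hf2|exfalso].
  set (E := fun x => x1 <= x <= x2 /\ forall y, x1 <= y <= x -> L < f y).
  assert (HE1 : E x1).
  { split; [lra|]. intros y Hy. replace y with x1 by lra. exact Hf1. }
  destruct (completeness E) as [s [Hub Hlub]].
  { exists x2. intros x [Hx _]. lra. }
  { exists x1. exact HE1. }
  assert (Hs1 : x1 <= s) by (apply Hub; exact HE1).
  assert (Hs2 : s <= x2) by (apply Hlub; intros x [Hx _]; lra).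
  assert (Hbefore : forall y, x1 <= y < s -> L < f y).
  { intros y Hy. destruct (Rlt_or_le L (f y)) as [Hfy|Hfy]; [exact Hfy|exfalso].
    assert (s <= y); [|lra].
    apply Hlub. intros x [_ Hx].
    destruct (Rle_or_lt x y) as [Hxy|Hxy]; [exact Hxy|].
    specialize (Hx y ltac:(lra)). lra. }
  destruct (Rle_or_lt (f s) L) as [Hfs|Hfs].
  - (* At [s] the derivative is positive, so [f] was below [L] just before [s]. *)
    destruct (below_left_of_pos_deriv f s (f' s) (Hd s ltac:(lra))
                (Hpush s ltac:(lra) Hfs)) as [delta [Hdelta Hleft]].
    assert (Hx1s : x1 < s) by (destruct Hs1 as [ | <- ]; lra).
    set (y := Rmax x1 (s - delta / 2)).
    assert (Hy : x1 <= y < s /\ s - delta < y).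
    { unfold y. destruct (Rle_dec x1 (s - delta / 2)).
      - rewrite Rmax_right by lra. lra.
      - rewrite Rmax_left by lra. lra. }
    specialize (Hleft y ltac:(lra)). specialize (Hbefore y ltac:(lra)). lra.
  - (* By continuity [f] stays above [L] a little beyond [s]. *)
    assert (Hsx2 : s < x2) by (destruct Hs2 as [ | -> ]; lra).
    destruct (above_near_of_continuity f s L
                (derivable_continuous_pt f s (exist _ (f' s) (Hd s ltac:(lra)))) Hfs)
      as [delta [Hdelta Hnear]].
    set (z := Rmin x2 (s + delta / 2)).
    assert (Hz : s < z <= x2 /\ z < s + delta).
    { unfold z. destruct (Rle_dec x2 (s + delta / 2)).
      - rewrite Rmin_left by lra. lra.
      - rewrite Rmin_right by lra. lra. }
    assert (HEz : E z).
    { split; [lra|]. intros y Hy.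
      destruct (Rlt_or_le y s); [apply Hbefore; lra|].
      apply Hnear. rewrite Rabs_right; lra. }
    specialize (Hub z HEz). lra.
Qed.

Lemma nondecreasing_of_pos_deriv (f f' : R -> R) (a : R) :
  (forall x, a < x -> derivable_pt_lim f x (f' x)) ->
  (forall x, a < x -> 0 < f' x) ->
  forall x y, a < x -> x <= y -> f x <= f y.
Proof.
  intros Hd Hpos x y Hx [Hxy | <-]; [|lra].
  destruct (MVT_cor2 f f' x y Hxy (fun z Hz => Hd z ltac:(lra))) as [z [Hmvt Hz]].
  pose proof (Hpos z ltac:(lra)). nra.
Qed.

(* A derivative bounded below by [k / x] with [k > 0] makes [f] grow at
   least like [k ln x], hence unbounded above. *)
Lemma unbounded_of_deriv_ge_inv (f f' : R -> R) (a k : R) :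
  0 <= a -> 0 < k ->
  (forall x, a < x -> derivable_pt_lim f x (f' x)) ->
  (forall x, a < x -> k / x <= f' x) ->
  forall M, exists x, a < x /\ M < f x.
Proof.
  intros Ha Hk Hd Hge M.
  set (x0 := a + 1).
  assert (Hx0 : 0 < x0) by (unfold x0; lra).
  set (T := (Rabs (M - f x0) + 1) / k).
  assert (HT : 0 < T).
  { unfold T. pose proof (Rabs_pos (M - f x0)). apply Rdiv_lt_0_compat; lra. }
  set (X := x0 * exp T).
  assert (HX : x0 < X).
  { assert (1 < exp T) by (rewrite <- exp_0; apply exp_increasing; lra).
    unfold X. nra. }
  (* [f - k ln] is nondecreasing, so [f X >= f x0 + k (ln X - ln x0) = f x0 + k T]. *)
  destruct (MVT_cor2 (fun x => f x - k * ln x) (fun x => f' x - k * / x) x0 X HX)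
    as [z [Hmvt Hz]].
  { intros z Hz.
    apply (derivable_pt_lim_minus f (mult_real_fct k ln)); [apply Hd; unfold x0 in *; lra|].
    apply derivable_pt_lim_scal, derivable_pt_lim_ln. lra. }
  assert (Hslope : 0 <= f' z - k * / z).
  { pose proof (Hge z ltac:(unfold x0 in *; lra)). unfold Rdiv in *. lra. }
  assert (Hln : ln X = ln x0 + T) by (unfold X; rewrite ln_mult, ln_exp; [reflexivity|lra|apply exp_pos]).
  assert (HkT : k * T = Rabs (M - f x0) + 1) by (unfold T; field; lra).
  exists X; split; [unfold x0 in *; lra|].
  pose proof (Rle_abs (M - f x0)).
  assert (0 <= (f' z - k * / z) * (X - x0)) by (apply Rmult_le_pos; lra).
  rewrite Hln in Hmvt. nra.
Qed.

(* The drift [D(w, Q)] governing the ratio [w = zeta / phi]; [Q] is the forcing term. *)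
Definition ratio_drift (alpha b w Q : R) : R :=
  (w * (alpha - b * w) + Q) / (alpha * (alpha - 1) + b * w).

Lemma ode_rhs_minus_ratio (p alpha b phi z : R) :
  0 < phi -> 0 < z -> 0 < b -> 1 < alpha ->
  ode_rhs p alpha (- b) phi z - z / phi =
  ratio_drift alpha b (z / phi) (Rpower phi p / (z * phi)).
Proof.
  intros Hphi Hz Hb Ha. unfold ode_rhs, ratio_drift.
  assert (0 < z / phi) by (apply Rdiv_lt_0_compat; lra).
  assert (0 < alpha * (alpha - 1)) by nra.
  assert (0 < alpha * (alpha - 1) + b * (z / phi)) by nra.
  assert (0 < alpha * (alpha - 1) * phi + b * z) by nra.
  field; lra.
Qed.

Lemma ratio_deriv (p alpha b : R) (zeta : R -> R) (x : R) :
  0 < b -> 1 < alpha -> 0 < x -> 0 < zeta x ->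
  derivable_pt_lim zeta x (ode_rhs p alpha (- b) x (zeta x)) ->
  derivable_pt_lim (fun y => zeta y / y) x
    (ratio_drift alpha b (zeta x / x) (Rpower x p / (zeta x * x)) / x).
Proof.
  intros Hb Ha Hx Hz Hd.
  rewrite <- ode_rhs_minus_ratio by assumption.
  replace ((ode_rhs p alpha (- b) x (zeta x) - zeta x / x) / x)
    with ((ode_rhs p alpha (- b) x (zeta x) * id x - 1 * zeta x) / (id x)²)
    by (unfold id, Rsqr; field; lra).
  exact (derivable_pt_lim_div zeta id x _ 1 Hd (derivable_pt_lim_id x) ltac:(unfold id; lra)).
Qed.

Lemma ratio_drift_lower (alpha b eps w Q : R) :
  1 < alpha -> 0 < b -> 0 < eps -> 0 < w -> 0 <= Q ->
  b * w <= alpha - b * eps ->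
  w * (b * eps / alpha ^ 2) <= ratio_drift alpha b w Q.
Proof.
  intros Ha Hb Heps Hw HQ Hlow. unfold ratio_drift.
  assert (Hden : 0 < alpha * (alpha - 1) + b * w) by nra.
  assert (Hden' : alpha * (alpha - 1) + b * w <= alpha ^ 2) by nra.
  assert (Hwbe : 0 < w * b * eps) by (apply Rmult_lt_0_compat; [apply Rmult_lt_0_compat|]; lra).
  apply Rle_trans with (w * b * eps / alpha ^ 2); [right; field; lra|].
  apply Rle_trans with (w * b * eps / (alpha * (alpha - 1) + b * w)); unfold Rdiv.
  - apply Rmult_le_compat_l; [lra|]. apply Rinv_le_contravar; lra.
  - apply Rmult_le_compat_r; [left; apply Rinv_0_lt_compat; lra|]. nra.
Qed.

(* Above the band, [b w >= alpha + b eps], with a small forcing term the drift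
   is bounded away from 0 from above (using [b w >= alpha] to control the denominator). *)
Lemma ratio_drift_upper (alpha b eps w Q : R) :
  1 < alpha -> 0 < b -> 0 < eps -> 0 < w -> 0 <= Q ->
  alpha + b * eps <= b * w -> Q <= w * b * eps / 2 ->
  ratio_drift alpha b w Q <= - (eps / (2 * alpha)).
Proof.
  intros Ha Hb Heps Hw HQ Hup HQsmall. unfold ratio_drift.
  assert (Hden : 0 < alpha * (alpha - 1) + b * w) by nra.
  apply Rmult_le_reg_r with (2 * alpha * (alpha * (alpha - 1) + b * w)); [nra|].
  replace ((w * (alpha - b * w) + Q) / (alpha * (alpha - 1) + b * w)
             * (2 * alpha * (alpha * (alpha - 1) + b * w)))
    with (2 * alpha * (w * (alpha - b * w) + Q)) by (field; lra).
  replace (- (eps / (2 * alpha)) * (2 * alpha * (alpha * (alpha - 1) + b * w)))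
    with (- eps * (alpha * (alpha - 1) + b * w)) by (field; lra).
  assert (Hnum : w * (alpha - b * w) + Q <= - (w * b * eps / 2)) by nra.
  assert (Hscaled : 2 * alpha * (w * (alpha - b * w) + Q) <= - (alpha * eps * (b * w))).
  { apply Rle_trans with (2 * alpha * (- (w * b * eps / 2))); [|right; field].
    apply Rmult_le_compat_l; lra. }
  assert (Hwb : alpha <= b * w) by nra.
  assert (Hgap : 0 <= (alpha - 1) * (b * w - alpha) * eps).
  { apply Rmult_le_pos; [apply Rmult_le_pos|]; lra. }
  nra.
Qed.

Lemma forcing_term_small (p alpha b eps x w : R) :
  p <= 1 -> 0 < b -> 0 < alpha -> 0 < eps -> 1 <= x ->
  2 * b <= alpha ^ 2 * eps * x -> alpha <= b * w ->
  Rpower x p / (w * x * x) <= w * b * eps / 2.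
Proof.
  intros Hp Hb Ha Heps Hx Hlarge Hw.
  assert (Hw0 : 0 < w) by (apply Rmult_lt_reg_l with b; lra).
  assert (Hpow : Rpower x p <= x).
  { rewrite <- (Rpower_1 x) at 2 by lra. apply Rle_Rpower; lra. }
  apply Rle_trans with (1 / (w * x)).
  - replace (1 / (w * x)) with (x / (w * x * x)) by (field; lra).
    unfold Rdiv. apply Rmult_le_compat_r; [|exact Hpow].
    left. apply Rinv_0_lt_compat. apply Rmult_lt_0_compat; [apply Rmult_lt_0_compat|]; lra.
  -
    assert (Hsq : alpha ^ 2 <= (b * w) ^ 2) by (apply pow_incr; lra).
    assert (Hlarge_w : 2 * b <= (b * w) ^ 2 * eps * x).
    { apply Rle_trans with (alpha ^ 2 * eps * x); [exact Hlarge|].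
      rewrite !Rmult_assoc. apply Rmult_le_compat_r; [|exact Hsq].
      apply Rmult_le_pos; lra. }
    apply Rmult_le_reg_r with (2 * (w * x)); [nra|].
    replace (1 / (w * x) * (2 * (w * x))) with 2 by (field; lra).
    replace (w * b * eps / 2 * (2 * (w * x))) with (w * w * b * eps * x) by (field; lra).
    apply Rmult_le_reg_l with b; [exact Hb|]. nra.
Qed.

Section RatioDynamics.

Variables (p alpha b eps : R) (zeta : R -> R).
Hypothesis Hp : p <= 1.
Hypothesis Halpha : 1 < alpha.
Hypothesis Hb : 0 < b.
Hypothesis Heps : 0 < eps.
Hypothesis Hpos : forall x, 0 < x -> 0 < zeta x.
Hypothesis Hder : forall x, 0 < x -> derivable_pt_lim zeta x (ode_rhs p alpha (- b) x (zeta x)).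

Let ratio (x : R) : R := zeta x / x.
Let ratio' (x : R) : R := ratio_drift alpha b (ratio x) (Rpower x p / (zeta x * x)) / x.
Let c : R := alpha / b.
(* Beyond [X0] the forcing term is negligible above the band. *)
Let X0 : R := Rmax 1 (2 * b / (alpha ^ 2 * eps)).

Lemma ratio_pos (x : R) : 0 < x -> 0 < ratio x.
Proof. intros Hx. apply Rdiv_lt_0_compat; auto. Qed.

Lemma ratio_has_deriv (x : R) : 0 < x -> derivable_pt_lim ratio x (ratio' x).
Proof. intros Hx. apply ratio_deriv; auto. Qed.

Lemma forcing_nonneg (x : R) : 0 < x -> 0 <= Rpower x p / (zeta x * x).
Proof.
  intros Hx. left. apply Rdiv_lt_0_compat; [apply exp_pos|].
  apply Rmult_lt_0_compat; auto.
Qed.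

Lemma ratio_rises_below (x : R) : 0 < x -> ratio x <= c - eps ->
  ratio x * (b * eps / alpha ^ 2) / x <= ratio' x.
Proof.
  intros Hx Hlow. unfold ratio'. unfold Rdiv at 1 3.
  apply Rmult_le_compat_r; [left; apply Rinv_0_lt_compat; exact Hx|].
  apply ratio_drift_lower; auto using ratio_pos, forcing_nonneg.
  assert (Hbc : b * c = alpha) by (unfold c; field; lra).
  nra.
Qed.

Lemma ratio_falls_above (x : R) : X0 <= x -> c + eps <= ratio x ->
  ratio' x <= - (eps / (2 * alpha) / x).
Proof.
  intros Hx Hup.
  assert (Hx1 : 1 <= x) by (apply Rle_trans with X0; [apply Rmax_l|exact Hx]).
  assert (Hbc : b * c = alpha) by (unfold c; field; lra).
  assert (Hw : 0 < ratio x) by (apply ratio_pos; lra).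
  unfold ratio'. replace (- (eps / (2 * alpha) / x)) with (- (eps / (2 * alpha)) / x) by (field; lra).
  unfold Rdiv at 1 3.
  apply Rmult_le_compat_r; [left; apply Rinv_0_lt_compat; lra|].
  apply ratio_drift_upper; auto.
  - apply forcing_nonneg; lra.
  - nra.
  - replace (zeta x) with (ratio x * x) by (unfold ratio; field; lra).
    apply forcing_term_small with alpha; try lra.
    + assert (Hlarge : 2 * b / (alpha ^ 2 * eps) <= x)
        by (apply Rle_trans with X0; [apply Rmax_r|exact Hx]).
      assert (0 < alpha ^ 2 * eps) by (apply Rmult_lt_0_compat; [apply pow_lt|]; lra).
      apply Rmult_le_reg_r with (/ (alpha ^ 2 * eps)); [apply Rinv_0_lt_compat; lra|].
      replace (alpha ^ 2 * eps * x * / (alpha ^ 2 * eps)) with x by (field; lra).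
      exact Hlarge.
    + nra.
Qed.

Lemma ratio_escapes_low : exists x1, 0 < x1 /\ c - eps < ratio x1.
Proof.
  apply NNPP. intros Hnone.
  assert (Hbelow : forall x, 0 < x -> ratio x <= c - eps).
  { intros x Hx. apply Rnot_lt_le. intros Habove. apply Hnone. exists x. auto. }
  set (K := b * eps / alpha ^ 2).
  assert (HK : 0 < K) by (apply Rdiv_lt_0_compat; [nra|apply pow_lt; lra]).
  assert (Hrise : forall x, 0 < x -> 0 < ratio' x).
  { intros x Hx. eapply Rlt_le_trans; [|apply ratio_rises_below; auto].
    apply Rdiv_lt_0_compat; [apply Rmult_lt_0_compat; [apply ratio_pos|]|]; auto. }
  (* Staying below [c - eps], the ratio increases, so its log-rate is bounded below. *)
  assert (Hmono : forall x, 1 <= x -> ratio 1 <= ratio x).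
  { intros x Hx. apply (nondecreasing_of_pos_deriv ratio ratio' 0); auto using ratio_has_deriv; lra. }
  destruct (unbounded_of_deriv_ge_inv ratio ratio' 1 (ratio 1 * K)) with (M := c - eps)
    as [x [Hx Hbig]].
  - lra.
  - apply Rmult_lt_0_compat; [apply ratio_pos; lra|exact HK].
  - intros x Hx. apply ratio_has_deriv. lra.
  - intros x Hx. eapply Rle_trans; [|apply ratio_rises_below; [lra|apply Hbelow; lra]].
    unfold Rdiv. apply Rmult_le_compat_r; [left; apply Rinv_0_lt_compat; lra|].
    apply Rmult_le_compat_r; [left; exact HK|]. apply Hmono. lra.
  - specialize (Hbelow x ltac:(lra)). lra.
Qed.

Lemma ratio_escapes_high : exists x2, X0 < x2 /\ ratio x2 < c + eps.
Proof.
  apply NNPP. intros Hnone.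
  assert (Habove : forall x, X0 < x -> c + eps <= ratio x).
  { intros x Hx. apply Rnot_lt_le. intros Hbelow. apply Hnone. exists x. auto. }
  assert (HX0 : 1 <= X0) by apply Rmax_l.
  (* Staying above [c + eps], the ratio decreases at a log-rate and turns negative. *)
  destruct (unbounded_of_deriv_ge_inv (fun x => - ratio x) (fun x => - ratio' x)
              X0 (eps / (2 * alpha))) with (M := 0) as [x [Hx Hneg]].
  - lra.
  - apply Rdiv_lt_0_compat; lra.
  - intros x Hx. apply derivable_pt_lim_opp, ratio_has_deriv. lra.
  - intros x Hx. pose proof (ratio_falls_above x ltac:(lra) (Habove x Hx)). lra.
  - pose proof (ratio_pos x ltac:(lra)). lra.
Qed.

(* Once it has entered, the ratio stays in the band: each edge is a barrier. *)
Lemma ratio_eventually_close :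
  exists X, 0 < X /\ forall x, X <= x -> c - eps < ratio x < c + eps.
Proof.
  destruct ratio_escapes_low as [x1 [Hx1 Hlow1]].
  destruct ratio_escapes_high as [x2 [Hx2 Hup2]].
  assert (HX0 : 1 <= X0) by apply Rmax_l.
  exists (Rmax x1 x2). split; [apply Rlt_le_trans with x1; [lra|apply Rmax_l]|].
  intros x Hx.
  assert (Hx1x : x1 <= x) by (apply Rle_trans with (Rmax x1 x2); [apply Rmax_l|exact Hx]).
  assert (Hx2x : x2 <= x) by (apply Rle_trans with (Rmax x1 x2); [apply Rmax_r|exact Hx]).
  split.
  - apply (barrier ratio ratio' 0 (c - eps)) with x1; auto using ratio_has_deriv.
    intros y Hy Hlow.
    eapply Rlt_le_trans; [|apply ratio_rises_below; auto].
    apply Rdiv_lt_0_compat; [apply Rmult_lt_0_compat; [apply ratio_pos|]|]; auto.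
    apply Rdiv_lt_0_compat; [nra|apply pow_lt; lra].
  - cut (- (c + eps) < - ratio x); [lra|].
    apply (barrier (fun y => - ratio y) (fun y => - ratio' y) X0 (- (c + eps))) with x2;
      auto; try lra.
    + intros y Hy. apply derivable_pt_lim_opp, ratio_has_deriv. lra.
    + intros y Hy Hup. pose proof (ratio_falls_above y ltac:(lra) ltac:(lra)) as Hfall.
      assert (0 < eps / (2 * alpha) / y) by (repeat apply Rdiv_lt_0_compat; lra).
      lra.
Qed.

End RatioDynamics.

Theorem proposition7p3 (p beta q : R) (zeta : R -> R) :
  0 < p < 1 / 2 ->
  beta < 0 ->
  (p + 1) / 3 < q < 1 ->
  let alpha := 2 / (2 - p) in
  (* zeta is a global positive increasing solution on (0, oo) *)
  (forall phi, 0 < phi -> 0 < zeta phi) ->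
  (forall x y, 0 < x -> x < y -> zeta x < zeta y) ->
  (forall phi, 0 < phi ->
     derivable_pt_lim zeta phi (ode_rhs p alpha beta phi (zeta phi))) ->
  (* zeta(0+) = 0 *)
  filterlim zeta (at_right 0) (locally 0) ->
  (* |zeta(phi) - gamma_beta phi^((p+1)/3)| <= phi^q for small phi *)
  (exists delta, 0 < delta /\ forall phi, 0 < phi < delta ->
     Rabs (zeta phi - gamma_beta p beta * Rpower phi ((p + 1) / 3)) <= Rpower phi q) ->
  forall eps, 0 < eps ->
  exists phi_eps, 0 < phi_eps /\
    forall phi, phi_eps <= phi ->
      (alpha / Rabs beta - eps) * phi <= zeta phi <= (alpha / Rabs beta + eps) * phi.
Proof.
  intros Hp Hbeta _ alpha Hpos _ Hder _ _ eps Heps.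
  assert (Halpha : 1 < alpha).
  { unfold alpha. apply Rmult_lt_reg_r with (2 - p); [lra|].
    unfold Rdiv. rewrite Rmult_assoc, Rinv_l; lra. }
  assert (Hb : beta = - Rabs beta) by (rewrite Rabs_left; lra).
  rewrite Hb in Hder.
  destruct (ratio_eventually_close p alpha (Rabs beta) eps zeta)
    as [X [HX Hclose]]; [lra|exact Halpha|apply Rabs_pos_lt; lra|exact Heps|exact Hpos|exact Hder|].
  exists X. split; [exact HX|]. intros phi Hphi.
  specialize (Hclose phi Hphi).
  replace (zeta phi) with (zeta phi / phi * phi) by (field; lra).
  split; apply Rmult_le_compat_r; lra.
Qed.
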